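(* Let $R$ be a finite chain ring, let $A\subseteq R$ be a well-conditioned set of size $n$, partitioned as $A=\bigcup_{i=1}^lA_i$ into nonempty blocks, and let $h_A(x)=\prod_{a\in A}(x-a)$. Let $$\mathcal F_A=\{f\in R[x]:\ \deg f<|A|,\ f \text{ is constant on } A_i \text{ for every } i\},$$ an $R$-algebra with the usual addition and multiplication modulo $h_A$. Then: (1) If $f\in\mathcal F_A$ is not a constant polynomial, then $\max_i|A_i|\le\deg f<|A|$. (2) $\mathcal F_A$ is a free $R$-module of rank $l$, with basis $f_1,\dots,f_l$ where $$f_i(x)=\sum_{a\in A_i}\prod_{b\in A\setminus\{a\}}\frac{x-b}{a-b},$$ which satisfy $f_i(A_j)=\delta_{i,j}$. (3) If $\{c_1,\dots,c_l\}\subseteq R$ is a well-conditioned set of $l$ distinct elements and $g$ is the unique polynomial of degree $<|A|$ with $g(A_i)=c_i$ for all $i$, then $1,g,g^2,\dots,g^{l-1}$ (powers computed in $\mathcal F_A$, i.e. modulo $h_A$) form a basis of $\mathcal F_A$ as an $R$-module.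
   Context: A finite chain ring is a finite commutative local ring whose ideals are totally ordered by inclusion; $N(R)$ is its unit group. A subset $T\subseteq N(R)$ is subtractive if $a-b\in N(R)$ for all distinct $a,b\in T$. A set $\{a_1,\dots,a_n\}\subseteq R$ is well-conditioned if either it is a subtractive subset of $N(R)$, or for some $i$ the set without $a_i$ is a subtractive subset of $N(R)$ and $a_i$ is a zero divisor (or $0$). For a block $A_i$ and $f$ constant on it, $f(A_i)$ denotes that constant value. *)

From HB Require Import structures.
From mathcomp Require Import all_boot all_order all_algebra.
Set Implicit Arguments. Unset Strict Implicit. Unset Printing Implicit Defensive.
Import Order.TTheory GRing.Theory.
Local Open Scope ring_scope.

Section ChainRing.
Variable R : finComUnitRingType.

Definition is_ideal (I : {set R}) : Prop :=
  0 \in I /\ (forall x y, x \in I -> y \in I -> x + y \in I) /\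
  (forall r x, x \in I -> r * x \in I).

Definition is_maximal_ideal (M : {set R}) : Prop :=
  is_ideal M /\ M != [set: R] /\
  forall I, is_ideal I -> M \subset I -> I = M \/ I = [set: R].

Definition local_ring : Prop :=
  exists M, is_maximal_ideal M /\ forall M', is_maximal_ideal M' -> M' = M.

(* finite chain ring: finite commutative local ring whose ideals are totally
   ordered by inclusion (finiteness and commutativity come from the type). *)
Definition chain_ring : Prop :=
  local_ring /\
  forall I J, is_ideal I -> is_ideal J -> (I \subset J) \/ (J \subset I).

Definition subtractive (T : {set R}) : Prop :=
  (forall a, a \in T -> a \is a GRing.unit) /\
  forall a b, a \in T -> b \in T -> a != b -> a - b \is a GRing.unit.

(* zero divisor, including 0 *)
Definition zero_divisor (a : R) : Prop := exists b : R, b != 0 /\ a * b = 0.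

Definition well_conditioned (A : {set R}) : Prop :=
  subtractive A \/
  exists a, a \in A /\ subtractive (A :\ a) /\ zero_divisor a.

Definition hA (A : {set R}) : {poly R} := \prod_(a in A) ('X - a%:P).

Definition in_FA (A : {set R}) (P : {set {set R}}) (f : {poly R}) : Prop :=
  (size f <= #|A|)%N /\
  forall B, B \in P -> forall x y, x \in B -> y \in B -> f.[x] = f.[y].

Definition fB (A B : {set R}) : {poly R} :=
  \sum_(a in B) \prod_(b in A :\ a) (('X - b%:P) * ((a - b)^-1)%:P).

End ChainRing.

From HB Require Import structures.
From mathcomp Require Import all_boot all_order all_algebra.
From Stdlib Require Import Classical.

Set Implicit Arguments.
Unset Strict Implicit.
Unset Printing Implicit Defensive.
Import Order.TTheory GRing.Theory.
Local Open Scope ring_scope.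

(* Elements of a well-conditioned set differ by units: the exceptional zero
   divisor a0 is a nonunit, and a0 - b is a unit for every unit b because the
   nonunits of a local ring are closed under addition.  Over a set A with unit
   differences the root count of a polynomial works as over a field, so a
   polynomial of size at most #|A| is determined by its values on A and
   Lagrange interpolation is available.  Thus F_A consists of the interpolants
   of block-constant functions, with the f_B as indicator basis; and f - f(a)
   vanishes on the whole block of a, which bounds the degree of a nonconstant
   f from below.  For (3), g^k mod h_A takes the value c_B^k on the block B, so
   sum_k d_k g^k interpolates B |-> D(c_B) with D = sum_k d_k X^k; as the c_B
   are #|P| points with unit differences, D is determined by these values,
   which gives both spanning and freeness. *)

Lemma size_sum_scale_leq (R : nzRingType) (I : finType) (Q : pred I)
    (w : I -> R) (F : I -> {poly R}) n :
  (forall i, Q i -> size (F i) <= n)%N -> (size (\sum_(i | Q i) w i *: F i)%R <= n)%N.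
Proof.
move=> sF; rewrite (leq_trans (size_sum _ _ _)) //; apply/bigmax_leqP => i Qi.
exact: leq_trans (size_scale_leq _ _) (sF i Qi).
Qed.

Section Interpolation.
Variable R : finComUnitRingType.
Implicit Types (S T : {set R}) (p q : {poly R}).

Definition unit_diff S := {in S &, forall a b, a != b -> a - b \is a GRing.unit}.

Lemma unit_diff_subset S T : T \subset S -> unit_diff S -> unit_diff T.
Proof. by move=> /subsetP sTS uS a b /sTS aS /sTS bS; apply: uS. Qed.

Lemma uniq_roots_unit_diff S : unit_diff S -> uniq_roots (enum S).
Proof.
move=> uS; have : {subset enum S <= S} by move=> x; rewrite mem_enum.
elim: (enum S) (enum_uniq S) => //= x s IH /andP[xs us] sub.
rewrite IH // => [|y ys]; last by apply: sub; rewrite inE ys orbT.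
rewrite andbT; apply/allP => y ys; rewrite /diff_roots mulrC eqxx /=.
apply: uS; [by apply: sub; rewrite inE ys orbT | by apply: sub; rewrite inE eqxx |].
by apply: contraNneq xs => <-.
Qed.

Lemma unit_diff_poly_eq0 S p : unit_diff S -> (size p <= #|S|)%N ->
  {in S, forall x, p.[x] = 0} -> p = 0.
Proof.
move=> uS sp p0; apply/eqP; apply: contraTT sp => pn0; rewrite -ltnNge cardE.
have rootS : all (root p) (enum S).
  by apply/allP => x; rewrite mem_enum => /p0/eqP.
exact: max_ring_poly_roots pn0 rootS (uniq_roots_unit_diff uS).
Qed.

Lemma unit_diff_poly_eq S p q : unit_diff S ->
  (size p <= #|S|)%N -> (size q <= #|S|)%N ->
  {in S, forall x, p.[x] = q.[x]} -> p = q.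
Proof.
move=> uS sp sq pq; apply/eqP; rewrite -subr_eq0; apply/eqP/(unit_diff_poly_eq0 uS).
  by rewrite (leq_trans (size_polyD _ _)) // size_polyN geq_max sp sq.
by move=> x xS; rewrite hornerD hornerN pq ?subrr.
Qed.

Lemma size_prod_XsubC_set S : size (\prod_(b in S) ('X - b%:P)) = #|S|.+1.
Proof. by rewrite -big_enum size_prod_XsubC cardE. Qed.

(* [fB A B] is convertible to [\sum_(a in B) lagrange_basis A a]. *)
Definition lagrange_basis S a : {poly R} :=
  \prod_(b in S :\ a) (('X - b%:P) * ((a - b)^-1)%:P).

Lemma lagrange_basisE S a : lagrange_basis S a =
  (\prod_(b in S :\ a) (a - b)^-1) *: \prod_(b in S :\ a) ('X - b%:P).
Proof. by rewrite /lagrange_basis big_split /= -rmorph_prod mulrC mul_polyC. Qed.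

Lemma size_lagrange_basis S a : a \in S -> (size (lagrange_basis S a) <= #|S|)%N.
Proof.
move=> aS; rewrite lagrange_basisE (leq_trans (size_scale_leq _ _)) //.
by rewrite size_prod_XsubC_set (cardsD1 a S) aS.
Qed.

Lemma horner_lagrange_basis S a x : unit_diff S -> a \in S -> x \in S ->
  (lagrange_basis S a).[x] = (x == a)%:R.
Proof.
move=> uS aS xS; rewrite /lagrange_basis horner_prod.
have [->|xa] := eqVneq x a.
  apply: big1 => b; rewrite !inE => /andP[ba bS].
  by rewrite hornerM hornerXsubC hornerC divrr // uS // eq_sym.
rewrite (bigD1 x) /=; last by rewrite !inE xS andbT.
by rewrite hornerM hornerXsubC subrr !mul0r.
Qed.

Lemma monic_hA S : hA S \is monic.
Proof. exact: monic_prod_XsubC. Qed.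

Lemma hA_root S x : x \in S -> (hA S).[x] = 0.
Proof. by move=> xS; rewrite horner_prod (bigD1 x) //= hornerXsubC subrr mul0r. Qed.

Lemma size_rmodp_hA S p : (size (Pdiv.Ring.rmodp p (hA S)) <= #|S|)%N.
Proof.
by rewrite -ltnS -size_prod_XsubC_set Pdiv.Ring.ltn_rmodp monic_neq0 ?monic_hA.
Qed.

Lemma horner_rmodp_hA S p x : x \in S ->
  (Pdiv.Ring.rmodp p (hA S)).[x] = p.[x].
Proof.
move=> xS; rewrite {2}(Pdiv.RingMonic.rdivp_eq (monic_hA S) p).
by rewrite hornerD hornerM hA_root // mulr0 add0r.
Qed.

End Interpolation.

Section LocalRing.
Variable R : finComUnitRingType.
Implicit Types (I S : {set R}) (x y : R).

Lemma ideal_unit_setT I u : is_ideal I -> u \in I -> u \is a GRing.unit ->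
  I = [set: R].
Proof.
by move=> [_ [_ mulI]] uI uU; apply/setP => r; rewrite inE -(divrK uU r) mulI.
Qed.

Definition principal_ideal x : {set R} := [set y | [exists r, y == x * r]].

Lemma principal_ideal_is_ideal x : is_ideal (principal_ideal x).
Proof.
split; first by rewrite inE; apply/existsP; exists 0; rewrite mulr0.
split=> [a b|r a]; rewrite !inE.
  move=> /existsP[s /eqP->] /existsP[t /eqP->].
  by apply/existsP; exists (s + t); rewrite mulrDr.
by move=> /existsP[s /eqP->]; apply/existsP; exists (r * s); rewrite mulrCA.
Qed.

Lemma mem_principal_ideal x : x \in principal_ideal x.
Proof. by rewrite inE; apply/existsP; exists 1; rewrite mulr1. Qed.

Lemma principal_ideal_proper x : x \isn't a GRing.unit ->
  principal_ideal x != [set: R].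
Proof.
apply: contra => /eqP full; have : 1 \in principal_ideal x by rewrite full inE.
by rewrite inE => /existsP[r /eqP r_inv]; apply/unitrPr; exists r.
Qed.

Lemma ideal_sub_maximal I : is_ideal I -> I != [set: R] ->
  exists M, is_maximal_ideal M /\ I \subset M.
Proof.
have [n] := ubnP #|~: I|; elim: n I => // n IH I; rewrite ltnS => leIn idI properI.
have [[J [idJ [IJ [JI properJ]]]] | maxI] :=
  classic (exists J, is_ideal J /\ I \subset J /\ J != I /\ J != [set: R]).
  have ltJI : (#|~: J| < #|~: I|)%N.
    by rewrite proper_card // properC properEneq IJ eq_sym JI.
  have [M [maxM JM]] := IH J (leq_trans ltJI leIn) idJ properJ.
  by exists M; split=> //; apply: subset_trans JM.
exists I; split=> //; do 2!split=> //; move=> J idJ IJ.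
have [->|JI] := eqVneq J I; first by left.
have [->|properJ] := eqVneq J [set: R]; first by right.
by case: maxI; exists J.
Qed.

Lemma zero_divisor_nonunit x : zero_divisor x -> x \isn't a GRing.unit.
Proof.
move=> [y [yn0 xy0]]; apply: contra yn0 => xU.
by rewrite -(mulKr xU y) xy0 mulr0.
Qed.

Hypothesis local : local_ring R.

Lemma local_nonunitD x y : x \isn't a GRing.unit -> y \isn't a GRing.unit ->
  x + y \isn't a GRing.unit.
Proof.
have [M [[idM [properM _]] uniqM]] := local.
have nonunitM z : z \isn't a GRing.unit -> z \in M.
  move=> zN; have [M' [maxM' zM']] :=
    ideal_sub_maximal (principal_ideal_is_ideal z) (principal_ideal_proper zN).
  by rewrite -(uniqM _ maxM'); apply: (subsetP zM'); apply: mem_principal_ideal.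
move=> /nonunitM xM /nonunitM yM; apply/negP => xyU.
have [_ [addM _]] := idM.
by move/eqP: properM; apply; apply: ideal_unit_setT idM (addM _ _ xM yM) xyU.
Qed.

Lemma well_conditioned_unit_diff S : well_conditioned S -> unit_diff S.
Proof.
case=> [[_ //]|[a0 [a0S [[unitS unit_diffS] /zero_divisor_nonunit a0N]]]].
have a0_diff b : b \in S -> b != a0 -> a0 - b \is a GRing.unit.
  move=> bS ba0; apply: contraT => a0bN.
  have bU : b \is a GRing.unit by apply: unitS; rewrite !inE ba0.
  have bE : b = a0 + - (a0 - b) by rewrite opprB addrC subrK.
  by move: bU; rewrite bE (negbTE (local_nonunitD a0N _)) // unitrN.
move=> a b aS bS ab.
have [ea|aa0] := eqVneq a a0; first by rewrite ea a0_diff // -ea eq_sym.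
have [eb|ba0] := eqVneq b a0; first by rewrite eb -opprB unitrN a0_diff.
by apply: unit_diffS; rewrite ?inE ?aa0 ?ba0.
Qed.

End LocalRing.

Section BlockConstantPolynomials.
Variable R : finComUnitRingType.
Variables (A : {set R}) (P : {set {set R}}).
Hypotheses (unitA : unit_diff A) (partP : partition P A).
Implicit Types (B C : {set R}) (f : {poly R}).

Lemma block_subset B : B \in P -> B \subset A.
Proof. by case/and3P: partP => /eqP <- _ _; apply: bigcup_sup. Qed.

Lemma block_mem B x : B \in P -> x \in B -> x \in A.
Proof. by move=> /block_subset /subsetP; apply. Qed.

Lemma mem_block B C x : B \in P -> C \in P -> x \in C -> (x \in B) = (B == C).
Proof.
case/and3P: partP => _ trivP _ BP CP xC; apply/idP/eqP => [xB|->//].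
by rewrite -(def_pblock trivP BP xB) (def_pblock trivP CP xC).
Qed.

Lemma exists_block x : x \in A -> exists2 B, B \in P & x \in B.
Proof.
case/and3P: partP => /eqP covP _ _; rewrite -covP => xA.
by exists (pblock P x); rewrite ?pblock_mem ?mem_pblock.
Qed.

Definition block_point B : R := odflt 0 [pick x in B].

Lemma block_point_mem B : B \in P -> block_point B \in B.
Proof.
move=> BP; rewrite /block_point; case: pickP => [//|noB].
have B0 : B = set0 by apply/setP => x; rewrite inE noB.
by case/and3P: partP => _ _; rewrite -B0 BP.
Qed.

Lemma in_FA_horner_block f B x : in_FA A P f -> B \in P -> x \in B ->
  f.[x] = f.[block_point B].
Proof. by move=> [_ fP] BP xB; apply: fP BP x _ xB (block_point_mem BP). Qed.

Lemma horner_fB B x : B \in P -> x \in A -> (fB A B).[x] = (x \in B)%:R.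
Proof.
move=> BP xA; rewrite horner_sum.
under eq_bigr => a aB do rewrite (horner_lagrange_basis unitA (block_mem BP aB) xA).
have [xB|xNB] := boolP (x \in B); last first.
  by apply: big1 => a aB; rewrite eq_sym (negbTE (memPn xNB a aB)).
rewrite (bigD1 x) //= eqxx big1 ?addr0 // => a /andP[_ ax].
by rewrite eq_sym (negbTE ax).
Qed.

Lemma size_fB B : B \in P -> (size (fB A B) <= #|A|)%N.
Proof.
move=> BP; rewrite (leq_trans (size_sum _ _ _)) //; apply/bigmax_leqP => a aB.
exact: size_lagrange_basis (block_mem BP aB).
Qed.

Lemma horner_fB_block B C x : B \in P -> C \in P -> x \in C ->
  (fB A B).[x] = (B == C)%:R.
Proof. by move=> BP CP xC; rewrite horner_fB ?(mem_block BP CP xC) ?(block_mem CP). Qed.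

Lemma fB_in_FA B : B \in P -> in_FA A P (fB A B).
Proof.
move=> BP; split=> [|C CP x y xC yC]; first exact: size_fB.
by rewrite (horner_fB_block BP CP xC) (horner_fB_block BP CP yC).
Qed.

Lemma in_FA_fB_expansion f : in_FA A P f ->
  f = \sum_(B in P) f.[block_point B] *: fB A B.
Proof.
move=> FAf; apply: (unit_diff_poly_eq unitA); first by case: FAf.
  by apply: size_sum_scale_leq => B; apply: size_fB.
move=> x /exists_block[C CP xC].
rewrite horner_sum (bigD1 C) //= big1 => [|B /andP[BP CB]].
  rewrite hornerZ (horner_fB_block CP CP xC) eqxx mulr1 addr0.
  exact: in_FA_horner_block FAf CP xC.
by rewrite hornerZ (horner_fB_block BP CP xC) (negbTE CB) mulr0.
Qed.

Lemma fB_free (c : {set R} -> R) : \sum_(B in P) c B *: fB A B = 0 ->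
  forall B, B \in P -> c B = 0.
Proof.
move=> sum0 B BP; have := congr1 (horner^~ (block_point B)) sum0.
have xB := block_point_mem BP.
rewrite horner0 horner_sum (bigD1 B) //= big1 => [|C /andP[CP CB]].
  by rewrite hornerZ (horner_fB_block BP BP xB) eqxx mulr1 addr0.
by rewrite hornerZ (horner_fB_block CP BP xB) (negbTE CB) mulr0.
Qed.

Lemma in_FA_block_card f B : in_FA A P f -> (1 < size f)%N -> B \in P ->
  (#|B| < size f)%N.
Proof.
move=> FAf sf BP; set q := f - (f.[block_point B])%:P.
have qn0 : q != 0.
  apply: contraTneq sf => /eqP; rewrite subr_eq0 => /eqP ->.
  by rewrite -leqNgt size_polyC_leq1.
have sq : (size q <= size f)%N.
  rewrite (leq_trans (size_polyD _ _)) // size_polyN geq_max leqnn.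
  exact: leq_trans (size_polyC_leq1 _) (ltnW sf).
rewrite (leq_trans _ sq) // ltnNge; apply: contra qn0 => sqB; apply/eqP.
apply: (unit_diff_poly_eq0 (unit_diff_subset (block_subset BP) unitA) sqB) => x xB.
by rewrite hornerD hornerN hornerC (in_FA_horner_block FAf BP xB) subrr.
Qed.

Section PowerBasis.
Variables (c : {set R} -> R) (g : {poly R}).
Hypotheses (c_inj : {in P &, injective c}) (unit_cP : unit_diff (c @: P))
  (g_blocks : forall B, B \in P -> forall x, x \in B -> g.[x] = c B).

Local Notation gpow k := (Pdiv.Ring.rmodp (g ^+ k) (hA A)).

Lemma horner_gpow k B x : B \in P -> x \in B -> (gpow k).[x] = c B ^+ k.
Proof.
move=> BP xB.
by rewrite horner_rmodp_hA ?(block_mem BP xB) // horner_exp (g_blocks BP xB).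
Qed.

Lemma gpow_in_FA k : in_FA A P (gpow k).
Proof.
split=> [|B BP x y xB yB]; first exact: size_rmodp_hA.
by rewrite (horner_gpow k BP xB) (horner_gpow k BP yB).
Qed.

Lemma horner_sum_gpow (d : 'I_#|P| -> R) B x : B \in P -> x \in B ->
  (\sum_(k < #|P|) d k *: gpow k).[x] = \sum_(k < #|P|) d k * c B ^+ k.
Proof.
move=> BP xB; rewrite horner_sum; apply: eq_bigr => k _.
by rewrite hornerZ (horner_gpow k BP xB).
Qed.

Lemma gpow_span f : in_FA A P f ->
  exists d : 'I_#|P| -> R, f = \sum_(k < #|P|) d k *: gpow k.
Proof.
move=> FAf.
pose L := \sum_(B in P) f.[block_point B] *: lagrange_basis (c @: P) (c B).
have sL : (size L <= #|P|)%N.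
  apply: size_sum_scale_leq => B BP.
  by rewrite (leq_trans (size_lagrange_basis (imset_f c BP))) ?leq_imset_card.
have L_blocks B : B \in P -> L.[c B] = f.[block_point B].
  move=> BP; rewrite horner_sum (bigD1 B) //= big1 => [|C /andP[CP CB]].
    by rewrite hornerZ horner_lagrange_basis ?imset_f // eqxx mulr1 addr0.
  rewrite hornerZ horner_lagrange_basis ?imset_f // (inj_in_eq c_inj) //.
  by rewrite eq_sym (negbTE CB) mulr0.
exists (fun k => L`_k); apply: (unit_diff_poly_eq unitA); first by case: FAf.
  by apply: size_sum_scale_leq => k _; apply: size_rmodp_hA.
move=> x /exists_block[B BP xB].
rewrite (horner_sum_gpow _ BP xB) -(horner_coef_wide _ sL) L_blocks //.
exact: in_FA_horner_block FAf BP xB.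
Qed.

Lemma gpow_free (d : 'I_#|P| -> R) : \sum_(k < #|P|) d k *: gpow k = 0 ->
  forall k, d k = 0.
Proof.
move=> sum0; pose D := \sum_(k < #|P|) d k *: ('X^k : {poly R}).
have D0 : D = 0.
  apply: (unit_diff_poly_eq0 unit_cP).
    rewrite card_in_imset //; apply: size_sum_scale_leq => k _.
    by rewrite size_polyXn.
  move=> _ /imsetP[B BP ->]; have xB := block_point_mem BP.
  have := congr1 (horner^~ (block_point B)) sum0.
  rewrite /= horner0 (horner_sum_gpow _ BP xB) => <-.
  by rewrite horner_sum; apply: eq_bigr => k _; rewrite hornerZ hornerXn.
move=> k; have := congr1 (fun p : {poly R} => p`_k) D0.
rewrite /= coef0 coef_sum (bigD1 k) //= coefZ coefXn eqxx mulr1.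
rewrite big1 ?addr0 // => j jk.
rewrite coefZ coefXn (_ : (k == j :> nat) = false) ?mulr0 //.
by rewrite eq_sym; exact: negbTE jk.
Qed.

End PowerBasis.

End BlockConstantPolynomials.

Theorem mainTheorem10 (R : finComUnitRingType) (A : {set R})
    (P : {set {set R}}) :
  chain_ring R -> well_conditioned A -> partition P A ->
  (* (1) *)
  (forall f : {poly R}, in_FA A P f -> (1 < size f)%N ->
     (forall B, B \in P -> (#|B| <= (size f).-1)%N) /\ ((size f).-1 < #|A|)%N)
  /\
  (* (2) *)
  ((forall B, B \in P -> in_FA A P (fB A B)) /\
   (forall B C, B \in P -> C \in P -> forall x, x \in C ->
      (fB A B).[x] = (B == C)%:R) /\
   (forall f, in_FA A P f ->
      exists c : {set R} -> R, f = \sum_(B in P) c B *: fB A B) /\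
   (forall c : {set R} -> R, \sum_(B in P) c B *: fB A B = 0 ->
      forall B, B \in P -> c B = 0))
  /\
  (* (3) *)
  (forall (c : {set R} -> R) (g : {poly R}),
     {in P &, injective c} -> well_conditioned (c @: P) ->
     (size g <= #|A|)%N ->
     (forall B, B \in P -> forall x, x \in B -> g.[x] = c B) ->
     let gpow := fun k : nat => Pdiv.Ring.rmodp (g ^+ k) (hA A) in
     (forall k, (k < #|P|)%N -> in_FA A P (gpow k)) /\
     (forall f, in_FA A P f ->
        exists d : 'I_#|P| -> R, f = \sum_(k < #|P|) d k *: gpow k) /\
     (forall d : 'I_#|P| -> R, \sum_(k < #|P|) d k *: gpow k = 0 ->
        forall k, d k = 0)).
Proof.
move=> [local _] /(well_conditioned_unit_diff local) unitA partP.
split; [|split].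
- move=> f FAf sf; split=> [B BP|].
    by case: (size f) sf (in_FA_block_card unitA partP FAf sf BP).
  by case: FAf sf; case: (size f).
- split; first exact: (fB_in_FA unitA partP).
  split; first by move=> B C BP CP x; apply: (horner_fB_block unitA partP).
  split; last exact: (fB_free unitA partP).
  by move=> f /(in_FA_fB_expansion unitA partP) fE; eexists; apply: fE.
move=> c g c_inj /(well_conditioned_unit_diff local) unit_cP _ g_blocks gpow.
split; first by move=> k _; apply: (gpow_in_FA partP g_blocks).
split; first exact: (gpow_span unitA partP c_inj unit_cP g_blocks).
exact: (gpow_free partP c_inj unit_cP g_blocks).
Qed.
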